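(* (i) For every packing 4-coloring $f$ of $S^2_{P_6}$, $f(22)\notin\{2,3\}$. (ii) For every packing 4-coloring $f'$ of $S^2_{P_8}$, the vertices $33$ and $44$ do not both receive color $1$, i.e. it is not the case that $f'(33)=f'(44)=1$.
   Context: $P_k$ is the path with vertex set $[k]=\{0,\dots,k-1\}$ and edges $\{i,i+1\}$, $0\le i\le k-2$. For a graph $G$ with vertex set $[k]$, the generalized Sierpi\'nski graph $S^2_G$ has vertex set $[k]^2$ (words $ab$, written e.g. $22$ for $a=b=2$), where $ab$ and $cd$ are adjacent iff either $a=c$ and $bd\in E(G)$, or $a\neq c$, $ac\in E(G)$, $b=c$ and $d=a$. A packing $c$-coloring of a graph $X$ is a map $f:V(X)\to\{1,\dots,c\}$ such that any two distinct vertices $u,v$ with $f(u)=f(v)=i$ satisfy $d_X(u,v)>i$. *)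

From mathcomp Require Import all_boot.
Set Implicit Arguments. Unset Strict Implicit. Unset Printing Implicit Defensive.

Definition path_adj (k : nat) : rel 'I_k :=
  fun i j => (i.+1 == j :> nat) || (j.+1 == i :> nat).

(* Generalized Sierpinski graph S^2_G on [k]^2, for a graph G given by adjacency
   relation adjG on 'I_k. Word ab is the pair (a,b). *)
Definition sierp2_adj (k : nat) (adjG : rel 'I_k) : rel ('I_k * 'I_k) :=
  fun u v =>
    let: (a, b) := u in let: (c, d) := v in
    ((a == c) && adjG b d) || [&& a != c, adjG a c, b == c & d == a].

Fixpoint reach (T : finType) (e : rel T) (n : nat) (u v : T) : bool :=
  if n is n'.+1 then (u == v) || [exists w, e u w && reach e n' w v]
  else u == v.

Definition dist_gt (T : finType) (e : rel T) (u v : T) (i : nat) : Prop :=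
  ~~ reach e i u v.

Definition packing_coloring (T : finType) (e : rel T) (c : nat) (f : T -> nat) : Prop :=
  (forall v, 1 <= f v <= c) /\
  (forall u v, u != v -> f u = f v -> dist_gt e u v (f u)).

Definition S2P (k : nat) := sierp2_adj (@path_adj k).

(* The vertex "ab" of S^2_{P_(k+1)} (a, b <= k). *)
Definition vtx (k a b : nat) : 'I_k.+1 * 'I_k.+1 := (inord a, inord b).
Arguments S2P k : clear implicits.

From mathcomp Require Import all_boot zmodp.
Set Implicit Arguments. Unset Strict Implicit. Unset Printing Implicit Defensive.

(* Restricted to the vertices within distance r of the prescribed ones, a
   packing colouring remains a colouring of that finite set in which equal
   colours i are at distance > i in the whole graph.  Those distances (at most
   4) are read off from balls obtained by unfolding adjacency lists, and an
   exhaustive backtracking search, run by [vm_compute], shows that no colouring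
   of the radius-3 ball around 22 in S^2_{P_6} gives 22 colour 2 or 3, and none
   of the radius-4 ball around {33, 44} in S^2_{P_8} gives both colour 1. *)

Section PackingSearch.
Variables (T : finType) (e : rel T) (V : seq T).
Hypothesis V_total : forall x, x \in V.

Definition neighbours (x : T) : seq T := [seq y <- V | e x y].

Fixpoint ball (n : nat) (u : T) : seq T :=
  if n is n'.+1 then u :: flatten [seq ball n' w | w <- neighbours u]
  else [:: u].

Lemma mem_ball n u v : (v \in ball n u) = reach e n u v.
Proof.
elim: n u => [|n IHn] u /=; first by rewrite inE eq_sym.
rewrite inE eq_sym; congr (_ || _); apply/flattenP/existsP.
- case=> s /mapP[w]; rewrite mem_filter => /andP[euw _] ->.
  by rewrite IHn => reach_wv; exists w; rewrite euw.
- case=> w /andP[euw reach_wv]; exists (ball n w); last by rewrite IHn.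
  by apply: map_f; rewrite mem_filter euw V_total.
Qed.

(* [rev \o undup \o rev] keeps first occurrences, so vertices come in order of
   distance to [S]; this order is what makes the search prune early. *)
Definition bfs_ball (r : nat) (S : seq T) : seq T :=
  rev (undup (rev (flatten [seq ball d s | d <- iota 0 r.+1, s <- S]))).

Definition with_balls (q : T * seq nat) : T * seq (nat * seq T) :=
  (q.1, [seq (c, ball c q.1) | c <- q.2]).

Fixpoint packing_extendable (acc : seq (T * nat))
    (todo : seq (T * seq (nat * seq T))) : bool :=
  if todo is q :: todo' then
    has (fun o =>
      if all (fun p => [|| p.2 != o.1, p.1 == q.1 | p.1 \notin o.2]) acc
      then packing_extendable ((q.1, o.1) :: acc) todo' else false) q.2
  else true.

Lemma packing_coloring_range c f v :
  packing_coloring e c f -> f v \in iota 1 c.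
Proof. by case=> /(_ v) f_range _; rewrite mem_iota add1n. Qed.

Lemma packing_extendable_complete c f acc todo :
  packing_coloring e c f ->
  all (fun p => f p.1 == p.2) acc -> all (fun q => f q.1 \in q.2) todo ->
  packing_extendable acc (map with_balls todo).
Proof.
case=> _ f_packing; elim: todo acc => [|[v cs] todo IHtodo] acc //= f_acc.
case/andP=> f_v f_todo; apply/hasP; exists (f v, ball (f v) v) => /=.
  exact: (map_f (fun c => (c, ball c v))).
have -> : all (fun p => [|| p.2 != f v, p.1 == v | p.1 \notin ball (f v) v]) acc.
  apply/allP=> -[u _] /(allP f_acc) /= /eqP <-.
  case: (eqVneq (f u) (f v)) => //= fuv; case: (eqVneq u v) => //= vu.
  by rewrite mem_ball; apply: f_packing; rewrite 1?eq_sym.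
by apply: IHtodo; rewrite //= eqxx.
Qed.

Definition packing_search (c r : nat) (S : seq T) (cs : seq nat) : bool :=
  packing_extendable [::]
    (map with_balls [seq (v, if v \in S then cs else iota 1 c) | v <- bfs_ball r S]).

Lemma packing_search_complete c f r S cs :
  packing_coloring e c f -> {in S, forall v, f v \in cs} ->
  packing_search c r S cs.
Proof.
move=> f_packing f_S; apply: (packing_extendable_complete f_packing) => //.
apply/allP=> _ /mapP[v _ ->] /=.
by case: ifP => [/f_S | _]; last exact: packing_coloring_range f_packing.
Qed.

End PackingSearch.

(* [enum] and [inord] are blocked by the opaque [idP] under [vm_compute];
   [inZp] computes. *)
Definition grid_enum (k : nat) : seq ('I_k.+1 * 'I_k.+1) :=
  [seq (inZp i, inZp j) | i <- iota 0 k.+1, j <- iota 0 k.+1].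

Lemma mem_grid_enum k x : x \in grid_enum k.
Proof.
case: x => i j; rewrite -[i]valZpK -[j]valZpK.
by apply: allpairs_f; rewrite mem_iota ltn_ord.
Qed.

Lemma vtx_inZp k a b : a <= k -> b <= k -> vtx k a b = (inZp a, inZp b).
Proof. by move=> ak bk; congr pair; apply: val_inj; rewrite /= inordK ?modn_small. Qed.

Theorem proposition6 :
  (forall f : 'I_6 * 'I_6 -> nat,
      packing_coloring (S2P 6) 4 f ->
      f (vtx 5 2 2) != 2 /\ f (vtx 5 2 2) != 3) /\
  (forall f' : 'I_8 * 'I_8 -> nat,
      packing_coloring (S2P 8) 4 f' ->
      ~ (f' (vtx 7 3 3) = 1 /\ f' (vtx 7 4 4) = 1)).
Proof.
split=> [f f_packing | f f_packing [f33 f44]].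
  rewrite vtx_inZp //; set x := (inZp 2, inZp 2).
  suff : f x \notin [:: 2; 3] by rewrite !inE negb_or => /andP.
  apply/negP => f_x; have f_S : {in [:: x], forall v, f v \in [:: 2; 3]}.
    by move=> v; rewrite inE => /eqP ->.
  by have := packing_search_complete (@mem_grid_enum 5) 3 f_packing f_S; vm_compute.
move: f33 f44; rewrite !vtx_inZp // => f33 f44.
have f_S : {in [:: (inZp 3, inZp 3); (inZp 4, inZp 4)], forall v, f v \in [:: 1]}.
  by move=> v; rewrite !inE => /orP[] /eqP ->; rewrite ?f33 ?f44.
by have := packing_search_complete (@mem_grid_enum 7) 4 f_packing f_S; vm_compute.
Qed.
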